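(* Let $G=(V,E)$ be a finite directed graph and let there be $k$ players; player $i\in\{1,\dots,k\}$ has a source–sink pair $(s_i,t_i)$ of vertices of $G$ and a flow amount $r_i>0$, and must route all of $r_i$ along a single $s_i$–$t_i$ path chosen from the set $\Pi_i$ of $s_i$–$t_i$ paths in $G$ (non-splittable, atomic routing). A feasible flow $f$ is a choice of one path $P_i\in\Pi_i$ for each player $i$; for an edge $e$, $f_e=\sum_{i: e\in P_i} r_i$ denotes the total flow on $e$. Each edge $e$ has a congestion function $c_e:\mathbb{R}^+\to\mathbb{R}^+$ which is affine, $c_e(x)=a_e x+b_e$, and a unit-price function $u_e:\mathbb{R}^+\to\mathbb{R}^+$. The cost to player $i$ of a path $P$ under flow $f$ is $t^i_P(f)=\sum_{e\in P}\bigl(c_e(f_e)+u_e(r_i)\bigr)$. Call $f$ an equilibrium flow if for every player $i$ and every pair $P,\tilde P\in\Pi_i$ with $P$ the path used by $i$ in $f$, one has $t^i_P(f)\le t^i_{\tilde P}(\tilde f)$, where $\tilde f$ is the flow identical to $f$ except that player $i$ routes its $r_i$ units along $\tilde P$ instead of $P$. Then at least one equilibrium flow exists.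
   Context: The per-unit price $u_e(r_i)$ is interpreted as $F_e(r_i)/r_i$, where $F_e(r_i)$ is the amount charged by the Internet service provider owning edge $e$ for routing $r_i$ units of player $i$'s flow; it depends only on player $i$'s own flow amount, while the congestion term $c_e$ depends on the total flow $f_e$ on the edge. *)

From HB Require Import structures.
From mathcomp Require Import all_boot all_order all_algebra.
From mathcomp Require Import reals.
Set Implicit Arguments. Unset Strict Implicit. Unset Printing Implicit Defensive.
Import Order.TTheory GRing.Theory Num.Theory.
Local Open Scope ring_scope.

Fixpoint is_walk (V E : eqType) (src dst : E -> V) (s t : V) (p : seq E) : bool :=
  match p with
  | [::] => s == t
  | e :: p' => (src e == s) && is_walk src dst (dst e) t p'
  end.

Definition is_stpath (V E : eqType) (src dst : E -> V) (s t : V) (p : seq E) : bool :=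
  is_walk src dst s t p && uniq (s :: map dst p).

Definition load (R : realType) (E : eqType) (k : nat) (r : 'I_k -> R)
  (P : 'I_k -> seq E) (e : E) : R :=
  \sum_(i < k | e \in P i) r i.

Definition deviate (E : Type) (k : nat) (P : 'I_k -> seq E) (i : 'I_k) (q : seq E)
  : 'I_k -> seq E :=
  fun j => if j == i then q else P j.

Definition pcost (R : realType) (E : eqType) (k : nat) (r : 'I_k -> R)
  (a b : E -> R) (u : E -> R -> R) (P : 'I_k -> seq E) (i : 'I_k) (q : seq E) : R :=
  \sum_(e <- q) ((a e * load r P e + b e) + u e (r i)).

Definition is_equilibrium (R : realType) (V E : eqType) (src dst : E -> V)
  (k : nat) (s t : 'I_k -> V) (r : 'I_k -> R) (a b : E -> R) (u : E -> R -> R)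
  (P : 'I_k -> seq E) : Prop :=
  forall (i : 'I_k) (q : seq E), is_stpath src dst (s i) (t i) q ->
    pcost r a b u P i (P i) <= pcost r a b u (deviate P i q) i q.

(* A weighted Rosenthal potential.  For a flow P put
     Phi P = sum_e a_e (f_e^2 + sum_{i : e in P_i} r_i^2)
           + sum_i 2 r_i sum_{e in P_i} (b_e + u_e(r_i)).
   When player i alone switches from P_i to q, the edge term of Phi changes by
   2 r_i a_e f'_e on the edges of q and by -2 r_i a_e f_e on those of P_i (the
   squared loads are what makes the r_i^2 correction exact), so Phi changes by
   exactly 2 r_i times the change of player i's cost.  Simple paths have at
   most |E| edges, so there are finitely many flows, and a flow minimising Phi
   is an equilibrium because r_i > 0. *)
From HB Require Import structures.
From mathcomp Require Import all_boot all_order all_algebra.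
From mathcomp Require Import reals.
From mathcomp Require Import ring.
Set Implicit Arguments. Unset Strict Implicit. Unset Printing Implicit Defensive.
Import Order.TTheory GRing.Theory Num.Theory.
Local Open Scope ring_scope.

Section PotentialGame.

Variables (R : realDomainType) (E : choiceType) (k : nat).
Variables (feasible : 'I_k -> pred (seq E)) (cands : seq (seq E)).
Hypothesis feasible_cands : forall i q, feasible i q -> q \in cands.
Hypothesis feasible_exists : forall i, exists q, feasible i q.

Variables (w : 'I_k -> R) (cost : ('I_k -> seq E) -> 'I_k -> seq E -> R).
Variable Phi : ('I_k -> seq E) -> R.
Hypothesis w_gt0 : forall i, 0 < w i.
Hypothesis Phi_ext : forall P Q, P =1 Q -> Phi P = Phi Q.
Hypothesis Phi_deviate : forall P i q,
  (forall j, feasible j (P j)) -> feasible i q ->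
  Phi (deviate P i q) - Phi P = w i * (cost (deviate P i q) i q - cost P i (P i)).

Lemma potential_argmin_equilibrium :
  exists P : 'I_k -> seq E, (forall i, feasible i (P i)) /\
    forall i q, feasible i q -> cost P i (P i) <= cost (deviate P i q) i q.
Proof.
pose valid (σ : {ffun 'I_k -> seq_sub cands}) :=
  [forall j, feasible j (ssval (σ j))].
have start_feasible j : feasible j (xchoose (feasible_exists j)).
  exact: xchooseP.
pose σ0 : {ffun 'I_k -> seq_sub cands} :=
  [ffun j => SeqSub (feasible_cands (start_feasible j))].
have valid_σ0 : valid σ0 by apply/forallP => j; rewrite ffunE.
pose Phi_ffun (σ : {ffun 'I_k -> seq_sub cands}) := Phi (fun j => ssval (σ j)).
case: (arg_minP Phi_ffun valid_σ0) => σ /forallP σ_feasible σ_min.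
exists (fun j => ssval (σ j)); split => // i q q_feasible.
pose σ' : {ffun 'I_k -> seq_sub cands} :=
  [ffun j => if j == i then SeqSub (feasible_cands q_feasible) else σ j].
have valid_σ' : valid σ'.
  by apply/forallP => j; rewrite /σ' ffunE; case: eqP => [->|_].
have := σ_min σ' valid_σ'.
rewrite /Phi_ffun (Phi_ext (P := fun j => ssval (σ' j))
  (Q := deviate (fun j => ssval (σ j)) i q)); last first.
  by move=> j; rewrite ffunE /deviate; case: (j == i).
rewrite -subr_ge0 Phi_deviate //.
by rewrite pmulr_rge0 ?subr_ge0.
Qed.

End PotentialGame.

Definition seqs_upto (E : finType) (n : nat) : seq (seq E) :=
  flatten [seq [seq tval t | t : m.-tuple E] | m <- iota 0 n.+1].

Lemma mem_seqs_upto (E : finType) (n : nat) (p : seq E) :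
  (size p <= n)%N -> p \in seqs_upto E n.
Proof.
move=> le_pn; apply/flattenP.
exists [seq tval t | t : (size p).-tuple E].
  by apply/mapP; exists (size p); rewrite // mem_iota.
by apply/mapP; exists (in_tuple p); rewrite ?mem_enum.
Qed.

Lemma stpath_uniq (V E : eqType) (src dst : E -> V) s t p :
  is_stpath src dst s t p -> uniq p.
Proof. by case/andP=> _ /= /andP[_ /map_uniq]. Qed.

Lemma stpath_size (V E : finType) (src dst : E -> V) s t p :
  is_stpath src dst s t p -> (size p <= #|E|)%N.
Proof. by move=> /stpath_uniq /card_uniqP <-; apply: max_card. Qed.

Section WeightedPotential.

Variables (R : realType) (E : finType) (k : nat).
Variables (r : 'I_k -> R) (a b : E -> R) (u : E -> R -> R).
Implicit Types (P Q : 'I_k -> seq E) (i : 'I_k) (q : seq E) (e : E).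

Definition load_sq P e : R := \sum_(j < k | e \in P j) r j ^+ 2.

Definition congestion_potential P : R :=
  \sum_e a e * (load r P e ^+ 2 + load_sq P e).

Definition price_potential P : R :=
  \sum_(j < k) 2 * r j * \sum_(e <- P j) (b e + u e (r j)).

Definition potential P : R := congestion_potential P + price_potential P.

Lemma potential_ext P Q : P =1 Q -> potential P = potential Q.
Proof.
move=> PQ; rewrite /potential /congestion_potential /price_potential /load /load_sq.
congr (_ + _); apply: eq_bigr => j _; last by rewrite PQ.
by congr (_ * (_ ^+ 2 + _)); apply: eq_bigl => l; rewrite PQ.
Qed.

Lemma big_users_split (g : 'I_k -> R) P i e :
  \sum_(j < k | e \in P j) g j =
  (if e \in P i then g i else 0) + \sum_(j < k | (j != i) && (e \in P j)) g j.
Proof. by rewrite big_mkcond (bigD1 i) //= -big_mkcondr. Qed.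

Lemma big_other_users_deviate (g : 'I_k -> R) P i q e :
  \sum_(j < k | (j != i) && (e \in deviate P i q j)) g j =
  \sum_(j < k | (j != i) && (e \in P j)) g j.
Proof. by apply: eq_bigl => j; rewrite /deviate; case: eqP. Qed.

Lemma congestion_edge_deviate P i q e :
  let P' := deviate P i q in
  a e * (load r P' e ^+ 2 + load_sq P' e) - a e * (load r P e ^+ 2 + load_sq P e)
  = 2 * r i * ((if e \in q then a e * load r P' e else 0)
               - (if e \in P i then a e * load r P e else 0)).
Proof.
rewrite /load /load_sq !(big_users_split _ (deviate P i q) i)
  !(big_users_split _ P i) !big_other_users_deviate /deviate eqxx.
by case: (e \in q); case: (e \in P i); ring.
Qed.

Lemma congestion_potential_deviate P i q : uniq (P i) -> uniq q ->
  congestion_potential (deviate P i q) - congestion_potential P =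
  2 * r i * (\sum_(e <- q) a e * load r (deviate P i q) e
             - \sum_(e <- P i) a e * load r P e).
Proof.
move=> uniq_Pi uniq_q.
rewrite (big_uniq _ uniq_q) (big_uniq _ uniq_Pi) /= big_mkcond.
rewrite [\sum_(e in P i) _]big_mkcond /congestion_potential -!sumrB mulr_sumr.
apply: eq_bigr => e _.
exact: congestion_edge_deviate.
Qed.

Lemma price_potential_deviate P i q :
  price_potential (deviate P i q) - price_potential P =
  2 * r i * (\sum_(e <- q) (b e + u e (r i)) - \sum_(e <- P i) (b e + u e (r i))).
Proof.
rewrite /price_potential (bigD1 i) //= [X in _ - X](bigD1 i) //= {1}/deviate eqxx.
rewrite (eq_bigr (fun j => 2 * r j * \sum_(e <- P j) (b e + u e (r j)))); last first.
  by move=> j /negbTE ji; rewrite /deviate ji.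
ring.
Qed.

Lemma potential_deviate P i q : uniq (P i) -> uniq q ->
  potential (deviate P i q) - potential P =
  2 * r i * (pcost r a b u (deviate P i q) i q - pcost r a b u P i (P i)).
Proof.
move=> uniq_Pi uniq_q; rewrite /potential opprD addrACA.
rewrite congestion_potential_deviate // price_potential_deviate /pcost.
rewrite !big_split /=; ring.
Qed.

End WeightedPotential.

Theorem theorem1 (R : realType) (V E : finType) (src dst : E -> V)
  (k : nat) (s t : 'I_k -> V) (r : 'I_k -> R)
  (a b : E -> R) (u : E -> R -> R)
  (hr : forall i, 0 < r i)
  (ha : forall e, 0 <= a e) (hb : forall e, 0 <= b e)
  (hu : forall e x, 0 <= x -> 0 <= u e x)
  (hpath : forall i, exists p : seq E, is_stpath src dst (s i) (t i) p) :
  exists P : 'I_k -> seq E,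
    (forall i, is_stpath src dst (s i) (t i) (P i)) /\
    is_equilibrium src dst s t r a b u P.
Proof.
have cands_spec i q : is_stpath src dst (s i) (t i) q -> q \in seqs_upto E #|E|.
  by move/stpath_size; apply: mem_seqs_upto.
have weight_gt0 i : 0 < 2 * r i by rewrite mulr_gt0.
have potential_step P i q :
    (forall j, is_stpath src dst (s j) (t j) (P j)) ->
    is_stpath src dst (s i) (t i) q ->
    potential r a b u (deviate P i q) - potential r a b u P =
    2 * r i * (pcost r a b u (deviate P i q) i q - pcost r a b u P i (P i)).
  move=> P_paths /stpath_uniq uniq_q.
  exact: potential_deviate (stpath_uniq (P_paths i)) uniq_q.
exact: (potential_argmin_equilibrium cands_spec hpath weight_gt0
  (@potential_ext R E k r a b u) potential_step).
Qed.
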